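(* Let $2^{t-1}<n\le 2^t-4$, $i=2^t-3-n$, $j=n-2^{t-1}+1$, $W_2=\mathbb{F}_2[w_2,w_3]$. Then for all $x,y,z\in W_2$, \[ q_{n-2}x+q_{n-1}y+q_nz=\det\begin{pmatrix} x& r_j& w_3q_{i-1}\\ y& w_3r_{j-2}& q_{i+1}\\ z& r_{j-1}& q_i\end{pmatrix} \] (over $\mathbb{F}_2$). Moreover, the kernel of the $W_2$-linear map $d_1\colon W_2^{\oplus 3}\to W_2$, $(x,y,z)\mapsto q_{n-2}x+q_{n-1}y+q_nz$, is a free graded $W_2$-module of rank $2$ with basis $u=(r_j,\,w_3r_{j-2},\,r_{j-1})^{\mathrm t}$ and $v=(w_3q_{i-1},\,q_{i+1},\,q_i)^{\mathrm t}$.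
   Context: $W_2$ is graded by $\deg w_2=2,\deg w_3=3$. $q_0=1$, $q_m=0$ for $m<0$, $q_m=w_2q_{m-2}+w_3q_{m-3}$ for $m\ge1$; $r_0=1$, $r_m=0$ for $m<0$, $r_{m+1}=w_2r_m+w_3^2r_{m-2}$ for $m\ge0$. *)

From HB Require Import structures.
From mathcomp Require Import all_boot all_order all_algebra.
Set Implicit Arguments. Unset Strict Implicit. Unset Printing Implicit Defensive.
Import GRing.Theory.
Local Open Scope ring_scope.

(* W_2 = F_2[w_2, w_3], realised as the polynomial ring F_2[w_2][w_3]. *)
Definition W2 : Type := {poly {poly 'F_2}}.
Definition w2 : W2 := ('X)%:P.   (* inner variable, deg 2 *)
Definition w3 : W2 := 'X.        (* outer variable, deg 3 *)

(* q_m for m >= 0 (q_m = 0 for m < 0):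
   q_0 = 1, q_1 = w2 q_{-1} + w3 q_{-2} = 0, q_2 = w2 q_0 + w3 q_{-1} = w2,
   q_{m+3} = w2 q_{m+1} + w3 q_m. *)
Fixpoint q (m : nat) : W2 :=
  match m with
  | 0 => 1
  | 1 => 0
  | 2 => w2
  | ((k as k0).+1 as k1).+2 => w2 * q k1 + w3 * q k0
  end.

(* r_m for m >= 0 (r_m = 0 for m < 0):
   r_0 = 1, r_1 = w2 r_0 = w2, r_2 = w2 r_1 = w2^2,
   r_{m+3} = w2 r_{m+2} + w3^2 r_m. *)
Fixpoint r (m : nat) : W2 :=
  match m with
  | 0 => 1
  | 1 => w2
  | 2 => w2 * w2
  | (((k as k0).+1).+1 as k2).+1 => w2 * r k2 + w3 ^+ 2 * r k0
  end.

Definition mx3 (a b c : W2 * W2 * W2) : 'M[W2]_3 :=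
  \matrix_(i < 3, j < 3)
    let col := nth a [:: a; b; c] j in
    nth 0 [:: col.1.1; col.1.2; col.2] i.

(* Put f := (q_{n-2}, q_{n-1}, q_n), and extend q, r by 0 to negative indices.  For i >= -1,
   j >= 0 with i + j + 2 a power of 2,
     q_{i+2j-1} = w3 r_{j-2} q_i + r_{j-1} q_{i+1},
     q_{i+2j}   = r_j q_i + w3 r_{j-1} q_{i-1},
     q_{i+2j+1} = r_j q_{i+1} + w3^2 r_{j-2} q_{i-1}:
   they pass from i + j + 2 = N to i + j + 2 = 2N by the doubling formulas, valid in
   characteristic 2,
     q_{2m} = q_m^2 + w2 q_{m-1}^2,  q_{2m+1} = w3 q_{m-1}^2,
     r_{2m} = r_m^2,  r_{2m+1} = w2 r_m^2 + w3^2 r_{m-1}^2.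
   For n = i + 2j + 1 they say f = u x v (signs do not matter in characteristic 2), so the
   determinant is the triple product x . (u x v).  If x . f = 0, the vectors x x v and u x x
   are parallel to f.  The entries of f generate an ideal containing w3^(n-2), and the one of
   q_{n-2}, q_{n-1} with even index 2m has constant term w2^m, so is prime to w3; hence every
   vector parallel to f is a multiple of f, and Cramer's rule gives x = a u + b v.  Freeness
   holds because f <> 0. *)

From HB Require Import structures.
From mathcomp Require Import all_boot all_order all_algebra.
From mathcomp Require Import ring zify.
Import GRing.Theory Num.Theory.
Set Implicit Arguments.
Unset Strict Implicit.
Unset Printing Implicit Defensive.
Local Open Scope ring_scope.

Section Vec3.
Variable R : comPzRingType.
Local Notation vec3 := (R * R * R)%type.

Definition coord3 (u : vec3) (k : 'I_3) : R := nth 0 [:: u.1.1; u.1.2; u.2] k.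
Definition dot3 (u v : vec3) : R := u.1.1 * v.1.1 + u.1.2 * v.1.2 + u.2 * v.2.
Definition cross3 (u v : vec3) : vec3 :=
  (u.1.2 * v.2 - u.2 * v.1.2, u.2 * v.1.1 - u.1.1 * v.2, u.1.1 * v.1.2 - u.1.2 * v.1.1).
Definition scale3 (a : R) (u : vec3) : vec3 := (a * u.1.1, a * u.1.2, a * u.2).

Lemma add3E (u v : vec3) : u + v = (u.1.1 + v.1.1, u.1.2 + v.1.2, u.2 + v.2).
Proof. by []. Qed.

Lemma vec3P (u v : vec3) : (forall k, coord3 u k = coord3 v k) -> u = v.
Proof.
case: u v => [[u0 u1] u2] [[v0 v1] v2] e.
by move: (e ord0) (e (inord 1)) (e ord_max); rewrite /coord3 inordK //= => -> -> ->.
Qed.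

Lemma coord3_0 k : coord3 0 k = 0.
Proof. by case: k => [[|[|[|]]]]. Qed.

Lemma coord3D u v k : coord3 (u + v) k = coord3 u k + coord3 v k.
Proof. by case: k => [[|[|[|]]]]. Qed.

Lemma coord3_scale a u k : coord3 (scale3 a u) k = a * coord3 u k.
Proof. by case: k => [[|[|[|]]]]. Qed.

Lemma scale3_0 u : scale3 0 u = 0.
Proof. by rewrite /scale3 !mul0r. Qed.

Lemma cross3_0l u : cross3 0 u = 0.
Proof. by rewrite /cross3 /= !mul0r subrr. Qed.

Lemma cross3_0r u : cross3 u 0 = 0.
Proof. by rewrite /cross3 /= !mulr0 subrr. Qed.

Lemma dot3_lin_cross3 (u v : vec3) a b : dot3 (scale3 a u + scale3 b v) (cross3 u v) = 0.
Proof. rewrite add3E /cross3 /dot3 /=; ring. Qed.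

Lemma cross3_lin_l (u v : vec3) a b : cross3 (scale3 a u + scale3 b v) v = scale3 a (cross3 u v).
Proof. rewrite add3E /cross3 /scale3 /=; congr (_, _, _); ring. Qed.

Lemma cross3_lin_r (u v : vec3) a b : cross3 u (scale3 a u + scale3 b v) = scale3 b (cross3 u v).
Proof. rewrite add3E /cross3 /scale3 /=; congr (_, _, _); ring. Qed.

Lemma scale3_dot3 (c g f : vec3) :
  scale3 (dot3 c g) f = scale3 (dot3 c f) g + cross3 (cross3 g f) c.
Proof. rewrite add3E /cross3 /scale3 /dot3 /=; congr (_, _, _); ring. Qed.

Lemma cross3_cross3_r (x u v : vec3) :
  cross3 (cross3 x v) (cross3 u v) = scale3 (dot3 x (cross3 u v)) v.
Proof. rewrite /cross3 /scale3 /dot3 /=; congr (_, _, _); ring. Qed.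

Lemma cross3_cross3_l (x u v : vec3) :
  cross3 (cross3 u x) (cross3 u v) = scale3 (- dot3 x (cross3 u v)) u.
Proof. rewrite /cross3 /scale3 /dot3 /=; congr (_, _, _); ring. Qed.

Lemma coord3_cross3_mul (x u v : vec3) k l :
  coord3 (cross3 u v) k * coord3 x l =
  coord3 (cross3 x v) k * coord3 u l + coord3 (cross3 u x) k * coord3 v l
  + (k == l)%:R * dot3 x (cross3 u v).
Proof.
by case: k l => [[|[|[|//]]] ?] [[|[|[|//]]] ?]; rewrite /coord3 /cross3 /dot3 /=; ring.
Qed.

End Vec3.

Section Vec3Domain.
Variable D : idomainType.
Implicit Types (u v f : D * D * D) (a b : D).

Lemma scale3_eq0 a f : f != 0 -> scale3 a f = 0 -> a = 0.
Proof.
move=> f_neq0 af0; apply/eqP; apply: contraNT f_neq0 => a_neq0.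
apply/eqP/vec3P => k; move/eqP: (congr1 (fun w => coord3 w k) af0).
by rewrite coord3_scale coord3_0 mulf_eq0 (negbTE a_neq0) => /eqP.
Qed.

Lemma scale3_lin_eq0 u v a b :
  cross3 u v != 0 -> scale3 a u + scale3 b v = 0 -> a = 0 /\ b = 0.
Proof.
move=> uv_neq0 uv0; split; apply: (scale3_eq0 uv_neq0).
- by rewrite -(cross3_lin_l u v a b) uv0 cross3_0l.
- by rewrite -(cross3_lin_r u v a b) uv0 cross3_0r.
Qed.

End Vec3Domain.

Section Vec3Poly.
Variable R : idomainType.
Implicit Types (u v x c f g : {poly R} * {poly R} * {poly R}).

Lemma Xn_dvd_of_mul (a b c : {poly R}) K :
  ~~ root b 0 -> a * b = 'X^K * c -> exists d, a = d * 'X^K.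
Proof.
move=> b0 abc.
have cop : coprimep 'X^K b by rewrite coprimep_expl // coprimep_sym coprimepX.
have : 'X^K %| a * b by rewrite abc dvdp_mulr.
by rewrite Gauss_dvdpl // => /(Pdiv.IdomainMonic.dvdpP (monicXn _ _)).
Qed.

Lemma cross3_eq0_scale3 c f g K k :
  dot3 c f = 'X^K -> ~~ root (coord3 f k) 0 -> cross3 g f = 0 -> exists al, g = scale3 al f.
Proof.
move=> cf fk gf.
have e : scale3 (dot3 c g) f = scale3 'X^K g by rewrite scale3_dot3 gf cross3_0l addr0 cf.
have [al al_def] : exists al, dot3 c g = al * 'X^K.
  by apply: (Xn_dvd_of_mul fk (c := coord3 g k)); rewrite -!coord3_scale e.
exists al; apply/vec3P => l; apply: (mulfI (monic_neq0 (monicXn R K))).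
move: (congr1 (fun w => coord3 w l) e); rewrite !coord3_scale al_def => <-; ring.
Qed.

Lemma kernel_dot3_cross3 c u v x K k :
  dot3 c (cross3 u v) = 'X^K -> ~~ root (coord3 (cross3 u v) k) 0 ->
  dot3 x (cross3 u v) = 0 -> exists a b, x = scale3 a u + scale3 b v.
Proof.
move=> cf fk xf0.
have [a xv] : exists a, cross3 x v = scale3 a (cross3 u v).
  by apply: (cross3_eq0_scale3 cf fk); rewrite cross3_cross3_r xf0 scale3_0.
have [b ux] : exists b, cross3 u x = scale3 b (cross3 u v).
  by apply: (cross3_eq0_scale3 cf fk); rewrite cross3_cross3_l xf0 oppr0 scale3_0.
exists a, b; apply/vec3P => l.
have fk_neq0 : coord3 (cross3 u v) k != 0 by apply: contraNneq fk => ->; exact: root0.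
apply: (mulfI fk_neq0); rewrite coord3_cross3_mul xv ux xf0 coord3D !coord3_scale; ring.
Qed.

End Vec3Poly.

Lemma pchar2_W2 : 2%N \in [pchar W2].
Proof. by rewrite !pchar_poly pchar_Fp. Qed.

Lemma opp_natr2_W2 : - 2%:R = 0 :> W2.
Proof. by rewrite (pcharf0 pchar2_W2) oppr0. Qed.

(* [ring] modulo 2: on [A - B = 0] the equations [2 = 0] and [-2 = 0] let [ring] cancel the
   monomials with coefficient [2] or [-2], which is all the identities below need. *)
Ltac ring_char2 := apply/subr0_eq; ring: (pcharf0 pchar2_W2) opp_natr2_W2.

Definition qZ (k : int) : W2 := if k is Posz m then q m else 0.
Definition rZ (k : int) : W2 := if k is Posz m then r m else 0.

Lemma qZ_neg k : k < 0 -> qZ k = 0. Proof. by case: k. Qed.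
Lemma rZ_neg k : k < 0 -> rZ k = 0. Proof. by case: k. Qed.

Lemma qZ_rec k : 1 <= k -> qZ k = w2 * qZ (k - 2) + w3 * qZ (k - 3).
Proof.
case: k => [[|[|[|m]]]|n] hk; try by exfalso; lia.
- by change (0 = w2 * 0 + w3 * 0 :> W2); ring.
- by change (w2 = w2 * 1 + w3 * 0); ring.
- have -> : m.+3%:Z - 2 = m.+1 by lia.
  by have -> : m.+3%:Z - 3 = m by lia.
Qed.

Lemma rZ_rec k : 1 <= k -> rZ k = w2 * rZ (k - 1) + w3 ^+ 2 * rZ (k - 3).
Proof.
case: k => [[|[|[|m]]]|n] hk; try by exfalso; lia.
- by change (w2 = w2 * 1 + w3 ^+ 2 * 0); ring.
- by change (w2 * w2 = w2 * w2 + w3 ^+ 2 * 0); ring.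
- have -> : m.+3%:Z - 1 = m.+2 by lia.
  by have -> : m.+3%:Z - 3 = m by lia.
Qed.

Lemma int_ind2 (P : int -> Prop) :
  (forall m, m <= 1 -> P m) -> (forall m, 0 <= m -> P m -> P (m + 1) -> P (m + 2)) ->
  forall m, P m.
Proof.
move=> base step.
suff Pnat (n : nat) : P n /\ P n.+1.
  by case=> [n|n]; [exact: (Pnat n).1 | apply: base].
elim: n => [|n [Pn Pn1]]; first by split; apply: base.
split=> //; rewrite -addn2 PoszD; apply: step => //.
by rewrite -PoszD addn1.
Qed.

Lemma qZ_double m :
  qZ (2 * m) = qZ m ^+ 2 + w2 * qZ (m - 1) ^+ 2 /\ qZ (2 * m + 1) = w3 * qZ (m - 1) ^+ 2.
Proof.
elim/int_ind2: m => [m hm | m hm [IH0 IH1] [IH0' IH1']].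
  have [->|[->|m_neg]] : m = 0 \/ m = 1 \/ m < 0 by lia.
  - by split; [change (1 = 1 ^+ 2 + w2 * 0 ^+ 2 :> W2) | change (0 = w3 * 0 ^+ 2 :> W2)]; ring.
  - by split; [change (w2 = 0 ^+ 2 + w2 * 1 ^+ 2) | change (w2 * 0 + w3 * 1 = w3 * 1 ^+ 2)]; ring.
  - by rewrite !qZ_neg; [split; ring | lia..].
rewrite (qZ_rec (k := 2 * (m + 2))) ?(qZ_rec (k := 2 * (m + 2) + 1))
        ?(qZ_rec (k := m + 2)); [|lia..].
have -> : 2 * (m + 2) - 2 = 2 * (m + 1) by lia.
have -> : 2 * (m + 2) - 3 = 2 * m + 1 by lia.
have -> : 2 * (m + 2) + 1 - 2 = 2 * (m + 1) + 1 by lia.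
have -> : 2 * (m + 2) + 1 - 3 = 2 * (m + 1) by lia.
have -> : m + 2 - 1 = m + 1 by lia.
have -> : m + 2 - 2 = m by lia.
have -> : m + 2 - 3 = m - 1 by lia.
have em : m + 1 - 1 = m by lia.
rewrite em in IH0' IH1'.
by rewrite IH0' IH1 IH1'; split; ring_char2.
Qed.

Lemma rZ_double m :
  rZ (2 * m) = rZ m ^+ 2 /\ rZ (2 * m + 1) = w2 * rZ m ^+ 2 + w3 ^+ 2 * rZ (m - 1) ^+ 2.
Proof.
elim/int_ind2: m => [m hm | m hm [IH0 IH1] [IH0' IH1']].
  have [->|[->|m_neg]] : m = 0 \/ m = 1 \/ m < 0 by lia.
  - by split; [change (1 = 1 ^+ 2 :> W2) | change (w2 = w2 * 1 ^+ 2 + w3 ^+ 2 * 0 ^+ 2)]; ring.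
  - by split; [change (w2 * w2 = w2 ^+ 2)
              | change (w2 * (w2 * w2) + w3 ^+ 2 * 1 = w2 * w2 ^+ 2 + w3 ^+ 2 * 1 ^+ 2)]; ring.
  - by rewrite !rZ_neg; [split; ring | lia..].
have even : rZ (2 * (m + 2)) = rZ (m + 2) ^+ 2.
  rewrite (rZ_rec (k := 2 * (m + 2))) ?(rZ_rec (k := m + 2)); [|lia..].
  have -> : 2 * (m + 2) - 1 = 2 * (m + 1) + 1 by lia.
  have -> : 2 * (m + 2) - 3 = 2 * m + 1 by lia.
  have -> : m + 2 - 1 = m + 1 by lia.
  have -> : m + 2 - 3 = m - 1 by lia.
  have em : m + 1 - 1 = m by lia.
  by rewrite IH1' IH1 em; ring_char2.
split=> //; rewrite (rZ_rec (k := 2 * (m + 2) + 1)); last by lia.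
have -> : 2 * (m + 2) + 1 - 1 = 2 * (m + 2) by lia.
have -> : 2 * (m + 2) + 1 - 3 = 2 * (m + 1) by lia.
have -> : m + 2 - 1 = m + 1 by lia.
by rewrite even IH0'.
Qed.

Lemma qZ_even m : qZ (2 * m) = qZ m ^+ 2 + w2 * qZ (m - 1) ^+ 2.
Proof. exact: (qZ_double m).1. Qed.
Lemma qZ_odd m : qZ (2 * m + 1) = w3 * qZ (m - 1) ^+ 2.
Proof. exact: (qZ_double m).2. Qed.
Lemma rZ_even m : rZ (2 * m) = rZ m ^+ 2.
Proof. exact: (rZ_double m).1. Qed.
Lemma rZ_odd m : rZ (2 * m + 1) = w2 * rZ m ^+ 2 + w3 ^+ 2 * rZ (m - 1) ^+ 2.
Proof. exact: (rZ_double m).2. Qed.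

Definition q_shift (i j : int) : Prop :=
  [/\ qZ (i + 2 * j - 1) = w3 * rZ (j - 2) * qZ i + rZ (j - 1) * qZ (i + 1),
      qZ (i + 2 * j) = rZ j * qZ i + w3 * rZ (j - 1) * qZ (i - 1) &
      qZ (i + 2 * j + 1) = rZ j * qZ (i + 1) + w3 ^+ 2 * rZ (j - 2) * qZ (i - 1)].

Lemma q_shift_even c b : q_shift c b -> q_shift (2 * c + 2) (2 * b).
Proof.
case=> e1 e2 e3; rewrite /q_shift.
have -> : 2 * c + 2 + 2 * (2 * b) - 1 = 2 * (c + 2 * b) + 1 by lia.
have -> : 2 * c + 2 + 2 * (2 * b) = 2 * (c + 2 * b + 1) by lia.
have -> : 2 * c + 2 + 1 = 2 * (c + 1) + 1 by lia.
have -> : 2 * c + 2 - 1 = 2 * c + 1 by lia.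
have -> : 2 * c + 2 = 2 * (c + 1) by lia.
have -> : 2 * b - 2 = 2 * (b - 1) by lia.
have -> : 2 * b - 1 = 2 * (b - 1) + 1 by lia.
rewrite !qZ_odd !qZ_even !rZ_odd !rZ_even.
have -> : c + 2 * b + 1 - 1 = c + 2 * b by lia.
have -> : c + 1 - 1 = c by lia.
have -> : b - 1 - 1 = b - 2 by lia.
rewrite e1 e2 e3; split; ring_char2.
Qed.

Lemma q_shift_odd a b : -1 <= a + 2 * b -> q_shift a b -> q_shift (2 * a + 1) (2 * b + 1).
Proof.
move=> hab [e1 e2 e3]; rewrite /q_shift.
have -> : 2 * a + 1 + 2 * (2 * b + 1) - 1 = 2 * (a + 2 * b + 1) by lia.
have -> : 2 * a + 1 + 2 * (2 * b + 1) + 1 = 2 * (a + 2 * b + 2) by lia.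
have -> : 2 * a + 1 + 2 * (2 * b + 1) = 2 * (a + 2 * b + 1) + 1 by lia.
have -> : 2 * a + 1 + 1 = 2 * (a + 1) by lia.
have -> : 2 * a + 1 - 1 = 2 * a by lia.
have -> : 2 * b + 1 - 2 = 2 * (b - 1) + 1 by lia.
have -> : 2 * b + 1 - 1 = 2 * b by lia.
rewrite !qZ_odd !qZ_even !rZ_odd !rZ_even (qZ_rec (k := a + 2 * b + 2)); last by lia.
have -> : a + 2 * b + 2 - 2 = a + 2 * b by lia.
have -> : a + 2 * b + 2 - 3 = a + 2 * b - 1 by lia.
have -> : a + 2 * b + 1 - 1 = a + 2 * b by lia.
have -> : a + 2 * b + 2 - 1 = a + 2 * b + 1 by lia.
have -> : a + 1 - 1 = a by lia.
have -> : b - 1 - 1 = b - 2 by lia.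
rewrite e1 e2 e3; split; ring_char2.
Qed.

Lemma q_shift_pow2 k (i j : int) : -1 <= i -> 0 <= j -> i + j + 2 = 2 ^+ k -> q_shift i j.
Proof.
elim: k i j => [|k IH] i j hi hj; rewrite ?expr0 ?exprS => hij.
  have [-> ->] : i = -1 /\ j = 0 by lia.
  by split; [change (0 = w3 * 0 * 0 + 0 * 1 :> W2) | change (0 = 1 * 0 + w3 * 0 * 0 :> W2)
            | change (1 = 1 * 1 + w3 ^+ 2 * 0 * 0 :> W2)]; ring.
have pow_ge1 : 1 <= (2 : int) ^+ k by rewrite exprn_ege1.
have [a [i_def | i_def]] : exists a, i = 2 * a \/ i = 2 * a + 1 by exists (i %/ 2)%Z; lia.
- have [b j_def] : exists b, j = 2 * b by exists (2 ^+ k - 1 - a); lia.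
  rewrite i_def j_def.
  have -> : 2 * a = 2 * (a - 1) + 2 by lia.
  apply/q_shift_even/IH; lia.
- have [b j_def] : exists b, j = 2 * b + 1 by exists (2 ^+ k - 2 - a); lia.
  rewrite i_def j_def; apply: q_shift_odd; [lia | apply: IH; lia].
Qed.

Lemma qZ_nat (m : nat) : qZ m = q m. Proof. by []. Qed.
Lemma rZ_nat (m : nat) : rZ m = r m. Proof. by []. Qed.

Lemma q_cross k (i j n : nat) :
  (0 < i)%N -> (1 < j)%N -> (i + j + 2 = 2 ^ k)%N -> n = (i + 2 * j + 1)%N ->
  (q (n - 2), q (n - 1), q n) =
  cross3 (r j, w3 * r (j - 2), r (j - 1)) (w3 * q (i - 1), q (i + 1), q i).
Proof.
move=> i_gt0 j_gt1 hij ->.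
have [] : q_shift i j.
  have pow2 : (2 : int) ^+ k = (2 ^ k)%N by rewrite -natz natrX.
  by apply: (q_shift_pow2 (k := k)); rewrite ?pow2 -?hij; lia.
have -> : i%:Z + 2 * j%:Z - 1 = (i + 2 * j + 1 - 2)%N by lia.
have -> : i%:Z + 2 * j%:Z + 1 = (i + 2 * j + 1)%N by lia.
have -> : i%:Z + 2 * j%:Z = (i + 2 * j + 1 - 1)%N by lia.
have -> : j%:Z - 2 = (j - 2)%N by lia.
have -> : j%:Z - 1 = (j - 1)%N by lia.
have -> : i%:Z - 1 = (i - 1)%N by lia.
rewrite !qZ_nat !rZ_nat => -> -> ->.
by rewrite /cross3 /=; congr (_, _, _); ring_char2.
Qed.

Lemma qS3 m : q m.+3 = w2 * q m.+1 + w3 * q m. Proof. by []. Qed.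

Lemma q_ideal_w3X m : exists c, dot3 c (q m, q m.+1, q m.+2) = w3 ^+ m.
Proof.
elim: m => [|m [c hc]].
  by exists (1, 0, 0); rewrite /dot3 /= expr0; change (1 * 1 + 0 * 0 + 0 * w2 = 1 :> W2); ring.
(* w3 q_m = q_{m+3} - w2 q_{m+1} *)
exists (w3 * c.1.2 - w2 * c.1.1, w3 * c.2, c.1.1).
by rewrite exprS -hc /dot3 /=; ring.
Qed.

Lemma q_even_root0 m : ~~ root (q m.*2) 0.
Proof.
suff q0 : (q m.*2).[0] = 'X ^+ m by rewrite /root q0 expf_neq0 // polyX_eq0.
elim: m => [|[|m] IH]; first by change ((1 : W2).[0] = 1); rewrite -polyC1 hornerC.
  by change (w2.[0] = 'X); rewrite hornerC.
rewrite doubleS in IH *; rewrite qS3 hornerD !hornerM IH hornerC hornerX.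
by rewrite mul0r addr0 -exprS.
Qed.

Lemma q_triple_root0 n : exists k, ~~ root (coord3 (q (n - 2), q (n - 1), q n) k) 0.
Proof.
have [m [hm | hm]] : exists m, (n - 2 = m.*2 \/ n - 1 = m.*2)%N.
  by exists ((n - 1) %/ 2)%N; lia.
- by exists ord0; rewrite /coord3 /= hm q_even_root0.
- by exists (inord 1); rewrite /coord3 inordK //= hm q_even_root0.
Qed.

Lemma det_mx3 (a b c : W2 * W2 * W2) : \det (mx3 a b c) = dot3 a (cross3 b c).
Proof.
rewrite (expand_det_col _ 0) !big_ord_recl big_ord0 /cofactor.
rewrite !(expand_det_col _ 0) !big_ord_recl !big_ord0 /cofactor.
rewrite !det_mx11 !mxE /= /bump /= /dot3 /cross3 /=; ring.
Qed.

Theorem mainTheorem17 (t n : nat) :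
  (2 ^ t.-1 < n)%N -> (n <= 2 ^ t - 4)%N ->
  let i := (2 ^ t - 3 - n)%N in
  let j := (n - 2 ^ t.-1 + 1)%N in
  let u := (r j, w3 * r (j - 2), r (j - 1)) in
  let v := (w3 * q (i - 1), q (i + 1), q i) in
  (forall x y z : W2,
      q (n - 2) * x + q (n - 1) * y + q n * z = \det (mx3 (x, y, z) u v))
  /\
  (forall x y z : W2,
      q (n - 2) * x + q (n - 1) * y + q n * z = 0 <->
      exists a b : W2,
        [/\ x = a * u.1.1 + b * v.1.1,
            y = a * u.1.2 + b * v.1.2 &
            z = a * u.2 + b * v.2])
  /\
  (forall a b : W2,
      [/\ a * u.1.1 + b * v.1.1 = 0,
          a * u.1.2 + b * v.1.2 = 0 &
          a * u.2 + b * v.2 = 0] -> a = 0 /\ b = 0).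
Proof.
move=> n_gt n_le i j u v.
have pow_t : (2 ^ t = 2 * 2 ^ t.-1)%N.
  case: (posnP t) => [t0 | t_gt0]; last by rewrite -expnS prednK.
  by move: n_gt n_le; rewrite t0 /=; lia.
have f_def : (q (n - 2), q (n - 1), q n) = cross3 u v.
  by apply: (q_cross (k := t.-1)); rewrite /i /j; lia.
have dotE x y z : q (n - 2) * x + q (n - 1) * y + q n * z = dot3 (x, y, z) (cross3 u v).
  by rewrite -f_def /dot3 /=; ring.
have [k fk] := q_triple_root0 n; rewrite f_def in fk.
have [c cf] : exists c, dot3 c (cross3 u v) = 'X^(n - 2).
  have [c <-] := q_ideal_w3X (n - 2).
  by exists c; rewrite -f_def; congr (dot3 c (_, q _, q _)); lia.
split; [|split].
- by move=> x y z; rewrite dotE det_mx3.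
- move=> x y z; rewrite dotE; split => [/(kernel_dot3_cross3 cf fk) [a [b]] | [a [b [-> -> ->]]]].
    by rewrite add3E => -[-> -> ->]; exists a, b.
  exact: dot3_lin_cross3.
- move=> a b [ua0 ub0 uc0]; apply: (@scale3_lin_eq0 _ u v).
    by apply: contraNneq fk => ->; rewrite coord3_0 root0.
  by rewrite add3E /= ua0 ub0 uc0.
Qed.
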